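(* Let $G$ be a simple undirected connected Laplacian integral graph with Laplacian $L$, and let $u,v$ be distinct vertices with $N(u)\setminus\{v\}=N(v)\setminus\{u\}$. Let $M=(\mathbf e_u-\mathbf e_v)(\mathbf e_u-\mathbf e_v)^T$ and set $\alpha=-\tfrac34$ if $u$ and $v$ are adjacent in $G$ and $\alpha=\tfrac14$ otherwise (so that the edge between $u$ and $v$ gets weight $\tfrac14$). Then $L^\alpha=L+\alpha M$ exhibits perfect state transfer between $u$ and $v$ at time $2\pi$, and $L^\alpha$ is periodic at every other vertex at time $2\pi$.
   Context: A graph is Laplacian integral if all eigenvalues of its Laplacian $L=D-A$ are integers. $N(u)$ is the neighbourhood of $u$; $\mathbf e_u$ is the standard basis vector of $u$. For a real symmetric $H$, $U_H(t)=\exp(-itH)$; $H$ exhibits perfect state transfer between distinct $u,v$ at time $\tau$ if $U_H(\tau)\mathbf e_u=\gamma\mathbf e_v$ for some $\gamma\in\mathbb C$; $H$ is periodic at $w$ at time $\tau\ne0$ if $U_H(\tau)\mathbf e_w=\gamma\mathbf e_w$ for some $\gamma\in\mathbb C$. *)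

From mathcomp Require Import all_boot all_order all_algebra.
From mathcomp Require Import all_classical all_reals all_analysis.
From mathcomp Require Import complex.
Import GRing.Theory Num.Theory.
Import numFieldNormedType.Exports.
Set Implicit Arguments.
Unset Strict Implicit.
Unset Printing Implicit Defensive.
Local Open Scope classical_set_scope.
Local Open Scope complex_scope.
Local Open Scope ring_scope.

Definition simple_graph n (adj : rel 'I_n) : Prop :=
  symmetric adj /\ irreflexive adj.

Definition connected_graph n (adj : rel 'I_n) : Prop :=
  forall x y : 'I_n, connect adj x y.

Definition nbhd n (adj : rel 'I_n) (u : 'I_n) : {set 'I_n} := [set w | adj u w].

Definition deg n (adj : rel 'I_n) (u : 'I_n) : nat := #|nbhd adj u|.

Definition laplacian (K : pzRingType) n (adj : rel 'I_n) : 'M[K]_n :=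
  \matrix_(i, j) (if i == j then (deg adj i)%:R else - (adj i j)%:R).

Definition laplacian_integral (R : rcfType) n (adj : rel 'I_n) : Prop :=
  forall a : R[i], eigenvalue (laplacian R[i] adj) a ->
    exists z : int, a = z%:~R.

Definition evec (K : pzRingType) n (u : 'I_n) : 'cV[K]_n := delta_mx u 0.

Definition expmx_partial (R : rcfType) n (A : 'M[R[i]]_n) (N : nat) : 'M[R[i]]_n :=
  \sum_(k < N) (k`!%:R)^-1 *: A ^+ k.

Definition expmx (R : realType) n (A : 'M[R[i]]_n) : 'M[R[i]]_n :=
  \matrix_(i, j)
    (lim ((fun N => (expmx_partial A N i j : (R[i])^o)) @ \oo) : R[i]).

Definition U_H (R : realType) n (H : 'M[R[i]]_n) (t : R) : 'M[R[i]]_n :=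
  expmx ((- 'i * t%:C) *: H).

Definition pst (R : realType) n (H : 'M[R[i]]_n) (u v : 'I_n) (tau : R) : Prop :=
  u != v /\ exists gamma : R[i], U_H H tau *m evec _ u = gamma *: evec _ v.

Definition periodic_at (R : realType) n (H : 'M[R[i]]_n) (w : 'I_n) (tau : R) : Prop :=
  tau != 0 /\ exists gamma : R[i], U_H H tau *m evec _ w = gamma *: evec _ w.

(* Put x = e_u - e_v and M = x x^T.  Since u and v are twins, x is an eigenvector
   of L for the integer lam = deg u + [u ~ v], so LM = ML = lam M, and M^2 = 2M.
   Hence (L + alpha M)^k = L^k + ((lam + 2 alpha)^k - lam^k)/2 M, and therefore
   exp(-itL^alpha) = exp(-itL) + (exp(-it(lam + 2 alpha)) - exp(-it lam))/2 M.
   At t = 2 pi the first term is the identity, because L is diagonalisable with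
   integer spectrum, and alpha makes lam + 2 alpha a half-integer, so the bracket
   is -2.  Thus U(2 pi) = I - M, which swaps e_u and e_v and fixes every other
   e_w. *)

From mathcomp Require Import all_boot all_order all_algebra.
From mathcomp Require Import all_classical all_reals all_analysis.
From mathcomp Require Import complex.
From mathcomp Require Import ring.
Import GRing.Theory Num.Theory.
Import numFieldNormedType.Exports.

Set Implicit Arguments.
Unset Strict Implicit.
Unset Printing Implicit Defensive.
Local Open Scope complex_scope.
Local Open Scope classical_set_scope.
Local Open Scope ring_scope.

Section StandardBasis.
Variables (K : comNzRingType) (n : nat).

Lemma tr_evec_mul_evec (u w : 'I_n) : (evec K u)^T *m evec K w = (u == w)%:R%:M.
Proof.
rewrite /evec trmx_delta mul_delta_mx_cond; apply/matrixP => a b.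
by rewrite !ord1 mulmxnE !mxE !eqxx.
Qed.

Lemma tr_evecB_mul_evec (u v w : 'I_n) :
  (evec K u - evec K v)^T *m evec K w = ((u == w)%:R - (v == w)%:R)%:M.
Proof. by rewrite linearB /= mulmxBl !tr_evec_mul_evec raddfB. Qed.

Lemma tr_evecB_mul_evecB (u v : 'I_n) : u != v ->
  (evec K u - evec K v)^T *m (evec K u - evec K v) = 2%:M.
Proof.
move=> uv; rewrite mulmxBr !tr_evecB_mul_evec !eqxx eq_sym (negbTE uv) -raddfB.
by congr (_%:M); rewrite subr0 sub0r opprK.
Qed.

Lemma reflect_evecB_mul_evec (u v w : 'I_n) :
  let x := evec K u - evec K v in
  (1%:M - x *m x^T) *m evec K w = evec K w - ((u == w)%:R - (v == w)%:R) *: x.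
Proof.
by move=> x; rewrite mulmxBl mul1mx -mulmxA tr_evecB_mul_evec mul_mx_scalar.
Qed.

Lemma reflect_evecB_swap (u v : 'I_n) : u != v ->
  let x := evec K u - evec K v in (1%:M - x *m x^T) *m evec K u = evec K v.
Proof.
move=> uv x; rewrite reflect_evecB_mul_evec eqxx eq_sym (negbTE uv) subr0 scale1r.
by rewrite opprB addrC subrK.
Qed.

Lemma reflect_evecB_fix (u v w : 'I_n) : w != u -> w != v ->
  let x := evec K u - evec K v in (1%:M - x *m x^T) *m evec K w = evec K w.
Proof.
move=> wu wv x; rewrite reflect_evecB_mul_evec !(eq_sym _ w) (negbTE wu) (negbTE wv).
by rewrite subr0 scale0r subr0.
Qed.

End StandardBasis.

Section Laplacian.
Variables (n : nat) (adj : rel 'I_n).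
Hypothesis adj_sym : symmetric adj.

Lemma tr_laplacian (K : pzRingType) : (laplacian K adj)^T = laplacian K adj.
Proof.
apply/matrixP => i j; rewrite !mxE eq_sym.
by case: eqP => [->|_] //; rewrite adj_sym.
Qed.

Lemma laplacian_normalmx (C : numClosedFieldType) : laplacian C adj \is normalmx.
Proof.
apply/normalmxP; suff -> : map_mx Num.conj (laplacian C adj)^T = laplacian C adj by [].
rewrite tr_laplacian; apply/matrixP => i j; rewrite !mxE.
by case: eqP => _; rewrite ?rmorphN rmorph_nat.
Qed.

Variables (u v : 'I_n).
Hypotheses (uv : u != v) (twins : nbhd adj u :\ v = nbhd adj v :\ u).

Lemma deg_twins : deg adj u = deg adj v.
Proof. by rewrite /deg (cardsD1 v) (cardsD1 u (nbhd adj v)) twins !inE adj_sym. Qed.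

Lemma adj_twins w : w != u -> w != v -> adj w u = adj w v.
Proof.
move=> wu wv; have /setP/(_ w) := twins.
by rewrite !in_setD1 !inE wu wv !(adj_sym _ w).
Qed.

Lemma laplacian_twins_eigen (K : comNzRingType) :
  laplacian K adj *m (evec K u - evec K v) =
  (deg adj u + adj u v)%:R *: (evec K u - evec K v).
Proof.
rewrite /evec mulmxBr -!colE; apply/matrixP => i k.
rewrite ord1 !mxE !eqxx !andbT natrD.
have [->|iu] := eqVneq i u; first by rewrite (negbTE uv) /=; ring.
have [->|iv] := eqVneq i v; first by rewrite /= adj_sym deg_twins; ring.
by rewrite /= adj_twins //; ring.
Qed.

End Laplacian.

Section MatrixPowers.
Variables (K : comUnitRingType) (n : nat).

Lemma expr_diag_mx (d : 'rV[K]_n) k :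
  diag_mx d ^+ k = diag_mx (map_mx (fun a => a ^+ k) d).
Proof.
elim: k => [|k IH].
  by rewrite expr0; apply/matrixP => i j; rewrite !mxE expr0.
rewrite exprS IH -mulmxE mul_diag_mx; apply/matrixP => i j; rewrite !mxE.
by case: eqP => [->|]; rewrite ?mulr1n ?mulr0n ?mulr0 // exprS.
Qed.

Lemma expr_conjmx (P A : 'M[K]_n) k : P \in unitmx ->
  (invmx P *m A *m P) ^+ k = invmx P *m A ^+ k *m P.
Proof.
move=> Pu; elim: k => [|k IH]; first by rewrite !expr0 mulmx1 mulVmx.
by rewrite !exprS IH -!mulmxE !mulmxA mulmxK // -!mulmxA.
Qed.

End MatrixPowers.

Lemma exprD_rank_one (K : fieldType) n {L M : 'M[K]_n} {lam m : K} (a : K) :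
  m != 0 -> L *m M = lam *: M -> M *m L = lam *: M -> M *m M = m *: M ->
  forall k, (L + a *: M) ^+ k = L ^+ k + (((lam + m * a) ^+ k - lam ^+ k) / m) *: M.
Proof.
move=> m0 LM ML MM.
have LkM k : L ^+ k *m M = lam ^+ k *: M.
  elim: k => [|k IH]; first by rewrite !expr0 mul1mx scale1r.
  by rewrite exprSr -mulmxE -mulmxA LM -scalemxAr IH scalerA exprS.
elim=> [|k IH]; first by rewrite !expr0 subrr mul0r scale0r addr0.
rewrite exprSr IH -!mulmxE mulmxDl !mulmxDr -!scalemxAl -!scalemxAr LkM ML MM.
rewrite exprSr -mulmxE -addrA; congr (_ + _).
by rewrite !scalerA -!scalerDl; congr (_ *: _); rewrite !exprSr; field.
Qed.

Lemma periodicz (U V : zmodType) (f : U -> V) (T : U) :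
  periodic f T -> forall (z : int) a, f (a + T *~ z) = f a.
Proof.
move=> fT [] m a; first exact: periodicn.
by rewrite NegzE mulrNz -(periodicn fT m.+1) subrK.
Qed.

Section ComplexExponential.
Variable R : realType.
Local Notation C := R[i].

Definition expc_partial (z : C) (N : nat) : C := \sum_(k < N) (k`!%:R)^-1 * z ^+ k.

Lemma norm_real_complex (x : R) : `|x%:C| = `|x|%:C.
Proof. by rewrite normc_def /= expr0n addr0 sqrtr_sqr. Qed.

Lemma cvg_real_complex (f : nat -> R) (a : R) : f @ \oo --> a ->
  (fun N => ((f N)%:C : C^o)) @ \oo --> (a%:C : C^o).
Proof.
move=> /cvgrPdist_lt fa; apply/cvgrPdist_lt => -[er ei].
rewrite ltcE /= => /andP[/eqP -> /fa]; apply: filterS => N.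
by rewrite complexr0 -rmorphB /= norm_real_complex ltcR.
Qed.

Lemma exp_coeff_iE (t : R) k :
  (k`!%:R)^-1 * ('i * t%:C) ^+ k = (cos_coeff t k)%:C + 'i * (sin_coeff t k)%:C.
Proof.
rewrite /cos_coeff /sin_coeff /= !rmorphM /= !rmorphXn /= rmorphN1 fmorphV /=.
rewrite !rmorph_nat exprMn.
have -> : 'i ^+ k = 'i ^+ odd k * (-1) ^+ k./2 :> C.
  by rewrite -{1}(odd_double_half k) exprD -mul2n exprM sqrCi.
case/boolP: (odd k) => k_odd /=; last by ring.
have -> : k.-1./2 = k./2 by rewrite -{1}(odd_double_half k) k_odd add1n /= doubleK.
ring.
Qed.

Lemma cvg_expc_partial_i (t : R) :
  (fun N => (expc_partial ('i * t%:C) N : C^o)) @ \oo -->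
  ((cos t)%:C + 'i * (sin t)%:C : C^o).
Proof.
have -> : (fun N => expc_partial ('i * t%:C) N) =
    (fun N => (series (cos_coeff t) N)%:C + 'i * (series (sin_coeff t) N)%:C).
  apply/funext => N; rewrite /expc_partial /series /=.
  under eq_bigr do rewrite exp_coeff_iE.
  by rewrite big_split /= -mulr_sumr !rmorph_sum /= !big_mkord.
apply: cvgD.
  by apply: cvg_real_complex; rewrite unlock; exact: is_cvg_series_cos_coeff.
apply: cvgMl_tmp; apply: cvg_real_complex; rewrite unlock.
exact: is_cvg_series_sin_coeff.
Qed.

Lemma cvg_expc_partial_i_periodic (a : R) (z : int) :
  (fun N => (expc_partial ('i * (a + (pi *+ 2) *~ z)%:C) N : C^o)) @ \oo -->
  ((cos a)%:C + 'i * (sin a)%:C : C^o).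
Proof.
rewrite -(periodicz (@cosD2pi R) z) -(periodicz (@sinD2pi R) z).
exact: cvg_expc_partial_i.
Qed.

Lemma cvg_expc_partial_2pi_int (z : int) :
  (fun N => (expc_partial (- 'i * (2 * pi)%:C * z%:~R) N : C^o)) @ \oo -->
  (1 : C^o).
Proof.
have -> : - 'i * (2 * pi)%:C * z%:~R = 'i * (0 + (pi *+ 2) *~ (- z))%:C :> C.
  by rewrite add0r mulrNz rmorphN rmorphMz /= mulr2n; ring.
by have := @cvg_expc_partial_i_periodic 0 (- z); rewrite cos0 sin0 mulr0 addr0.
Qed.

Lemma cvg_expc_partial_2pi_halfint (z : int) :
  (fun N => (expc_partial (- 'i * (2 * pi)%:C * (z%:~R + 2^-1)) N : C^o)) @ \oo -->
  (-1 : C^o).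
Proof.
have -> : - 'i * (2 * pi)%:C * (z%:~R + 2^-1) =
    'i * (pi + (pi *+ 2) *~ (- z - 1))%:C :> C.
  by rewrite rmorphD rmorphMz /= mulr2n; field.
have := @cvg_expc_partial_i_periodic pi (- z - 1).
by rewrite cospi sinpi mulr0 addr0 rmorphN1.
Qed.

End ComplexExponential.

Section MatrixExponential.
Variables (R : realType) (n : nat).
Local Notation C := R[i].
Implicit Types (A B L M P : 'M[C]_n).

Lemma expmx_partial_rank_one {L M} {lam m : C} (a : C) N : m != 0 ->
  L *m M = lam *: M -> M *m L = lam *: M -> M *m M = m *: M ->
  expmx_partial (L + a *: M) N = expmx_partial L N +
    ((expc_partial (lam + m * a) N - expc_partial lam N) / m) *: M.
Proof.
move=> m0 LM ML MM; rewrite /expmx_partial /expc_partial.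
under eq_bigr do rewrite (exprD_rank_one a m0 LM ML MM) scalerDr scalerA.
rewrite big_split /= -scaler_suml -sumrB mulr_suml; congr (_ + _ *: _).
by apply: eq_bigr => k _; rewrite mulrA mulrBr.
Qed.

Lemma expmx_partial_conj P A N : P \in unitmx ->
  expmx_partial (invmx P *m A *m P) N = invmx P *m expmx_partial A N *m P.
Proof.
move=> Pu; rewrite /expmx_partial mulmx_sumr mulmx_suml.
apply: eq_bigr => k _; rewrite expr_conjmx //.
by rewrite scalemxAl scalemxAr.
Qed.

Lemma expmx_partial_diag (d : 'rV[C]_n) N :
  expmx_partial (diag_mx d) N = diag_mx (map_mx (fun z => expc_partial z N) d).
Proof.
apply/matrixP => i j; rewrite /expmx_partial summxE !mxE.
under eq_bigr do rewrite expr_diag_mx !mxE.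
case: eqP => _; last by rewrite big1 // => k _; rewrite mulr0n mulr0.
by rewrite mulr1n; apply: eq_bigr => k _; rewrite mulr1n.
Qed.

Lemma expmx_lim A B :
  (forall i j, (fun N => (expmx_partial A N i j : C^o)) @ \oo --> (B i j : C^o)) ->
  expmx A = B.
Proof.
move=> AB; apply/matrixP => i j; rewrite mxE.
exact: (cvg_lim (@norm_hausdorff _ _) (AB i j)).
Qed.

Lemma cvg_expmx_partial_diagonalizable P (D E : 'rV[C]_n) : P \in unitmx ->
  (forall l, (fun N => (expc_partial (D 0 l) N : C^o)) @ \oo --> (E 0 l : C^o)) ->
  forall i j, (fun N => (expmx_partial (invmx P *m diag_mx D *m P) N i j : C^o))
    @ \oo --> ((invmx P *m diag_mx E *m P) i j : C^o).
Proof.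
move=> Pu DE i j.
have entryE F : (invmx P *m diag_mx F *m P) i j = \sum_l invmx P i l * F 0 l * P l j.
  by rewrite mul_mx_diag mxE; apply: eq_bigr => l _; rewrite mxE.
under eq_fun do rewrite expmx_partial_conj // expmx_partial_diag entryE.
rewrite entryE; apply: cvg_big => [|l _]; first exact: add_continuous.
under eq_fun do rewrite mxE.
by apply: cvgMr_tmp; apply: cvgMl_tmp; exact: DE.
Qed.

Lemma expmx_rank_one L M B (lam m a p q : C) : m != 0 ->
  L *m M = lam *: M -> M *m L = lam *: M -> M *m M = m *: M ->
  (forall i j, (fun N => (expmx_partial L N i j : C^o)) @ \oo --> (B i j : C^o)) ->
  (fun N => (expc_partial (lam + m * a) N : C^o)) @ \oo --> (p : C^o) ->
  (fun N => (expc_partial lam N : C^o)) @ \oo --> (q : C^o) ->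
  expmx (L + a *: M) = B + ((p - q) / m) *: M.
Proof.
move=> m0 LM ML MM LB cp cq; apply: expmx_lim => i j.
under eq_fun do rewrite (expmx_partial_rank_one a _ m0 LM ML MM) !mxE.
rewrite !mxE; apply: cvgD; first exact: LB.
by apply: cvgMr_tmp; apply: cvgMr_tmp; apply: cvgB; [exact: cp | exact: cq].
Qed.

End MatrixExponential.

Lemma spectral_diag_eigenvalue (C : numClosedFieldType) n (A : 'M[C]_n) l :
  A \is normalmx -> eigenvalue A (spectral_diag A 0 l).
Proof.
move=> /orthomx_spectralP AD; have Pu := spectral_unit A.
set P := spectralmx A in AD Pu *; set D := spectral_diag A in AD *.
apply/eigenvalueP; exists (row l P).
  have PA : P *m A = diag_mx D *m P by rewrite {1}AD !mulmxA mulmxV // mul1mx.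
  by rewrite -row_mul PA row_mul row_diag_mx -scalemxAl -rowE.
rewrite rowE mulmx_free_eq0 ?row_free_unit //.
by apply/eqP => /matrixP/(_ 0 l); rewrite !mxE !eqxx /= => /eqP; rewrite oner_eq0.
Qed.

Section PeriodicRankOne.
Variables (R : realType) (n : nat).
Local Notation C := R[i].

Lemma cvg_expmx_partial_2pi_integral (L : 'M[C]_n) : L \is normalmx ->
  (forall b, eigenvalue L b -> exists z : int, b = z%:~R) ->
  forall i j, (fun N => (expmx_partial ((- 'i * (2 * pi)%:C) *: L) N i j : C^o))
    @ \oo --> ((1%:M : 'M[C]_n) i j : C^o).
Proof.
move=> Lnormal Lint i j; have /orthomx_spectralP LD := Lnormal.
set c := - 'i * (2 * pi)%:C; set P := spectralmx L; set D := spectral_diag L.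
have Pu : P \in unitmx by exact: spectral_unit.
have cLD : c *: L = invmx P *m diag_mx (c *: D) *m P.
  rewrite {1}LD scalemxAl scalemxAr; congr (_ *m _ *m _).
  by apply/matrixP => a b; rewrite !mxE mulrnAr.
rewrite cLD -(mulVmx Pu) -[in X in X i j](mulmx1 (invmx P)) -(diag_const_mx n (1 : C)).
apply: cvg_expmx_partial_diagonalizable => // l.
have [z Dz] := Lint _ (spectral_diag_eigenvalue l Lnormal).
by rewrite !mxE -/D Dz; exact: cvg_expc_partial_2pi_int.
Qed.

Lemma U_H_2pi_rank_one (L : 'M[C]_n) (x : 'cV[C]_n) (k z : int) (a : C) :
  L^T = L -> L \is normalmx ->
  (forall b, eigenvalue L b -> exists w : int, b = w%:~R) ->
  L *m x = k%:~R *: x -> x^T *m x = 2%:M -> k%:~R + 2 * a = z%:~R + 2^-1 ->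
  U_H (L + a *: (x *m x^T)) (2 * pi) = 1%:M - x *m x^T.
Proof.
move=> Lsym Lnormal Lint Lx xx kaz; rewrite /U_H.
set c := - 'i * (2 * pi)%:C; set M := x *m x^T.
have MM : M *m M = 2 *: M.
  by rewrite /M mulmxA -(mulmxA x) xx mul_mx_scalar -scalemxAl.
have cLM : (c *: L) *m M = (c * k%:~R) *: M.
  by rewrite -scalemxAl /M mulmxA Lx -scalemxAl scalerA.
have McL : M *m (c *: L) = (c * k%:~R) *: M.
  by rewrite -scalemxAr /M -mulmxA -{1}Lsym -trmx_mul Lx linearZ /= -scalemxAr scalerA.
have -> : 1%:M - M = 1%:M + ((-1 - 1) / 2) *: M.
  by congr (_ + _); rewrite -scaleN1r; congr (_ *: _); field.
rewrite scalerDr scalerA.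
apply: (expmx_rank_one _ cLM McL MM) => //.
- exact: cvg_expmx_partial_2pi_integral.
- have -> : c * k%:~R + 2 * (c * a) = c * (z%:~R + 2^-1) by rewrite -kaz; ring.
  exact: cvg_expc_partial_2pi_halfint.
- exact: cvg_expc_partial_2pi_int.
Qed.

End PeriodicRankOne.

Theorem corollary2p6 (R : realType) (n : nat) (adj : rel 'I_n) (u v : 'I_n) :
  simple_graph adj ->
  connected_graph adj ->
  laplacian_integral R adj ->
  u != v ->
  nbhd adj u :\ v = nbhd adj v :\ u ->
  let M : 'M[R[i]]_n := (evec _ u - evec _ v) *m (evec _ u - evec _ v)^T in
  let alpha : R[i] := if adj u v then - (3%:R / 4%:R) else 1%:R / 4%:R in
  let La : 'M[R[i]]_n := laplacian R[i] adj + alpha *: M in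
  pst La u v (2 * pi) /\
  (forall w : 'I_n, w != u -> w != v -> periodic_at La w (2 * pi)).
Proof.
move=> [adj_sym _] _ Lint uv twins M alpha La.
set k : int := (deg adj u + adj u v)%N.
have Lx : laplacian R[i] adj *m (evec _ u - evec _ v) = k%:~R *: (evec _ u - evec _ v).
  by rewrite laplacian_twins_eigen // -pmulrn.
have kalpha : k%:~R + 2 * alpha = (if adj u v then k - 2 else k)%:~R + 2^-1.
  by rewrite /alpha; case: (adj u v); rewrite ?intrB; field.
have U2pi : U_H La (2 * pi) = 1%:M - M.
  exact: U_H_2pi_rank_one (tr_laplacian adj_sym _) (laplacian_normalmx adj_sym _)
    Lint Lx (tr_evecB_mul_evecB _ uv) kalpha.
split; first by split => //; exists 1; rewrite scale1r U2pi reflect_evecB_swap.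
move=> w wu wv; split; first by rewrite lt0r_neq0 // mulr_gt0 // pi_gt0.
by exists 1; rewrite scale1r U2pi reflect_evecB_fix.
Qed.
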